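(* Let $\mathbf C$ be a finite dimensional clone $\tau$-algebra. Then: (i) the $\rho_{\mathbf C}$-algebra $\mathbf R_{\mathbf C}$ is isomorphic to the free $\rho_{\mathbf C}$-algebra over a countably infinite set of generators in the variety $\mathrm{Var}(\mathbf R_{\mathbf C})$ generated by $\mathbf R_{\mathbf C}$; (ii) the clone $\rho_{\mathbf C}$-algebra $\overline{\mathbf R}_{\mathbf C}$ is isomorphic to the clone $\mathrm{Var}(\mathbf R_{\mathbf C})$-algebra.
   Context: A clone $\tau$-algebra is an algebra $\mathbf C=(C,\sigma^{\mathbf C}\ (\sigma\in\tau),q_n^{\mathbf C}\ (n\ge0),\mathsf e_i^{\mathbf C}\ (i\ge1))$ with $\mathsf e_i$ nullary, $q_n$ of arity $n+1$, satisfying: (C1) $q_n(\mathsf e_i,x_1,\dots,x_n)=x_i$ ($1\le i\le n$); (C2) $q_n(\mathsf e_j,x_1,\dots,x_n)=\mathsf e_j$ ($j>n$); (C3) $q_n(x,\mathsf e_1,\dots,\mathsf e_n)=x$; (C4) $q_k(x,y_1,\dots,y_k)=q_n(x,y_1,\dots,y_k,\mathsf e_{k+1},\dots,\mathsf e_n)$ ($n>k$); (C5) $q_n(q_n(x,\mathbf y),\mathbf z)=q_n(x,q_n(y_1,\mathbf z),\dots,q_n(y_n,\mathbf z))$; (C6) $q_n(\sigma(x_1,\dots,x_k),\mathbf y)=\sigma(q_n(x_1,\mathbf y),\dots,q_n(x_k,\mathbf y))$ for $\sigma\in\tau$ of arity $k$. An element $a$ is independent of $\mathsf e_n$ if $q_n(a,\mathsf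 e_1,\dots,\mathsf e_{n-1},\mathsf e_{n+1})=a$; its dimension is the largest $n$ on which it depends ($0$ if none, infinite if infinitely many); $\mathbf C$ is finite dimensional if all elements have finite dimension. A function $f:C^k\to C$ is $\mathbf C$-representable if $f(\mathsf e_1,\dots,\mathsf e_k)$ has dimension $\le k$ and $f(a_1,\dots,a_k)=q_k(f(\mathsf e_1,\dots,\mathsf e_k),a_1,\dots,a_k)$ for all $a_i\in C$; $R_{\mathbf C}$ is the set of $\mathbf C$-representable functions. The type $\rho_{\mathbf C}$ has one operation symbol $\overline f$ of arity $k$ for each $k$-ary $f\in R_{\mathbf C}$; $\mathbf R_{\mathbf C}=(C,f)_{f\in R_{\mathbf C}}$ is the $\rho_{\mathbf C}$-algebra interpreting $\overline f$ as $f$; $\overline{\mathbf R}_{\mathbf C}=(\mathbf R_{\mathbf C},q_n^{\mathbf C},\mathsf e_i^{\mathbf C})$ is a clone $\rho_{\mathbf C}$-algebra. For a variety $\mathcal V$ of $\nu$-algebras with free algebra $\mathbf F_{\mathcal V}$ over the countable set $I=\{v_1,v_2,\dots\}$ of free generators, the clone $\mathcal V$-algebra is $(\mathbf F_{\mathcal V},q_n^{\mathbf F},\mathsf e_i^{\mathbf F})$ with $\mathsf e_i^{\mathbf F}=v_i$ and $q_n^{\mathbf F}(a,b_1,\dots,b_n)=s(a)$, where $s$ is the unique endomorphism of $\mathbf F_{\mathcal V}$ with $s(v_i)=b_i$ for $i\le n$ and $s(v_i)=v_i$ for $i>n$. *)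

From mathcomp Require Import all_boot.
Set Implicit Arguments.
Unset Strict Implicit.
Unset Printing Implicit Defensive.

(* Conventions: all indices are 0-based.  The nullary constant e_(i+1) of the
   paper is [e i] (i : nat); an n-tuple (y_1,...,y_n) is a function
   ['I_n -> C] with y_(j+1) = y j; the free generator v_(i+1) is variable [i]. *)

Inductive term (S : Type) (ar : S -> nat) : Type :=
| Var : nat -> term ar
| App : forall s : S, ('I_(ar s) -> term ar) -> term ar.
Arguments Var {S ar}.
Arguments App {S ar}.

Fixpoint eval (S : Type) (ar : S -> nat) (A : Type)
  (op : forall s : S, ('I_(ar s) -> A) -> A) (x : nat -> A) (t : term ar) : A :=
  match t with
  | Var i => x i
  | App s ts => op s (fun j => eval op x (ts j))
  end.

(* The term
   functions form the subalgebra of A^(A^omega) generated by the projections,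
   i.e. the free algebra over the countable set of generators {v_1, v_2, ...}
   (v_(i+1) = i-th projection) in the variety Var(A, op). *)
Definition term_fun (S : Type) (ar : S -> nat) (A : Type)
  (op : forall s : S, ('I_(ar s) -> A) -> A) (g : (nat -> A) -> A) : Prop :=
  exists t : term ar, forall x, g x = eval op x t.

(* phi : A -> A^(A^omega) is an isomorphism of (A, op) onto the free algebra
   F_Var(A)(omega) (elements of the latter compared extensionally). *)
Definition iso_onto_free (S : Type) (ar : S -> nat) (A : Type)
  (op : forall s : S, ('I_(ar s) -> A) -> A) (phi : A -> (nat -> A) -> A) : Prop :=
  [/\ forall a, term_fun op (phi a),
      forall g, term_fun op g -> exists a, forall x, phi a x = g x,
      forall a b, (forall x, phi a x = phi b x) -> a = b
    & forall s (args : 'I_(ar s) -> A) x,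
        phi (op s args) x = op s (fun j => phi (args j) x)].

Section Clone.
Variables (tau : Type) (ar : tau -> nat) (C : Type).
Variable sig : forall s : tau, ('I_(ar s) -> C) -> C.
Variable q : forall n : nat, C -> ('I_n -> C) -> C.
Variable e : nat -> C.

Definition pad_e k (y : 'I_k -> C) (i : nat) : C :=
  match insub i with Some j => y j | None => e i end.

Definition is_clone_alg : Prop :=
  (forall n (y : 'I_n -> C) (i : 'I_n), q (e i) y = y i) /\
  (forall n (y : 'I_n -> C) (j : nat), n <= j -> q (e j) y = e j) /\
  (forall n x, q x (fun i : 'I_n => e i) = x) /\
  (forall k n x (y : 'I_k -> C), k < n ->
                 q x y = q x (fun i : 'I_n => pad_e y i)) /\
  (forall n x (y z : 'I_n -> C),
                 q (q x y) z = q x (fun i => q (y i) z)) /\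
  (forall n s (xs : 'I_(ar s) -> C) (y : 'I_n -> C),
                 q (sig xs) y = sig (fun j => q (xs j) y)).

(* a is independent of e_n (n >= 1):
   q_n(a, e_1, ..., e_(n-1), e_(n+1)) = a *)
Definition indep (a : C) (n : nat) : Prop :=
  q a (fun i : 'I_n => if i.+1 < n then e i else e n) = a.

Definition dim_le (a : C) (k : nat) : Prop := forall n, k < n -> indep a n.

Definition finite_dim : Prop := forall a, exists k, dim_le a k.

Definition representable k (f : ('I_k -> C) -> C) : Prop :=
  dim_le (f (fun i => e i)) k /\
  forall a : 'I_k -> C, f a = q (f (fun i => e i)) a.

(* the type rho_C: one symbol of arity k for each k-ary representable f *)
Definition rsym : Type := {k : nat & {f : ('I_k -> C) -> C | representable f}}.
Definition rar (s : rsym) : nat := projT1 s.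
(* R_C interprets the symbol of f as f *)
Definition rop (s : rsym) : ('I_(rar s) -> C) -> C := proj1_sig (projT2 s).

End Clone.

(* Clone operations of the clone Var(A)-algebra on F = term functions:
   e_(i+1)^F = v_(i+1) = i-th projection, and
   q_n^F(g, h_1..h_n) = s(g), s the endomorphism with v_i |-> h_i (i <= n),
   v_i |-> v_i (i > n); on term functions s acts by substitution. *)
Definition eF (A : Type) (i : nat) : (nat -> A) -> A := fun x => x i.
Definition qF (A : Type) n (g : (nat -> A) -> A) (h : 'I_n -> (nat -> A) -> A)
  : (nat -> A) -> A :=
  fun x => g (fun i => match insub i with Some j => h j x | None => x i end).

From mathcomp Require Import all_boot.
From mathcomp Require Import zify.
From Stdlib Require Import FunctionalExtensionality ClassicalEpsilon.

(* An element a of dimension <= k induces the omega-ary function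
   x |-> q_k(a, x_1, ..., x_k), which by (C4) and the independence of a from
   every e_n, n > k, does not depend on k.  The map a |-> this function sends
   e_i to the i-th projection, commutes with the q_n (C5), hence is a
   rho_C-homomorphism, and is injective since its value at (e_1, e_2, ...)
   is a by (C3).  Its image consists of term functions because q_k(a, -) is
   itself a k-ary representable operation, and contains every term function
   t(x) since it maps the value of t at (e_1, e_2, ...) to it. *)

Definition restr {C : Type} n (x : nat -> C) : 'I_n -> C := fun i => x i.

Section CloneAlgebra.

Context {tau : Type} {ar : tau -> nat} {C : Type}.
Context {sig : forall s : tau, ('I_(ar s) -> C) -> C}.
Context {q : forall n : nat, C -> ('I_n -> C) -> C} {e : nat -> C}.
Arguments q {n}.
Hypothesis clone : is_clone_alg sig (@q) e.

Local Notation ropC := (rop (q:=@q) (e:=e)).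

Lemma q_e_proj n (y : 'I_n -> C) (i : 'I_n) : q (e i) y = y i.
Proof. by case: clone => + _; apply. Qed.

Lemma q_e_fix n (y : 'I_n -> C) j : n <= j -> q (e j) y = e j.
Proof. by case: clone => _ [+ _]; apply. Qed.

Lemma q_e_id n x : q x (fun i : 'I_n => e i) = x.
Proof. by case: clone => _ [_ [+ _]]; apply. Qed.

Lemma q_pad k n x (y : 'I_k -> C) :
  k < n -> q x y = q x (fun i : 'I_n => pad_e e y i).
Proof. by case: clone => _ [_ [_ [+ _]]]; apply. Qed.

Lemma q_comp n x (y z : 'I_n -> C) : q (q x y) z = q x (fun i => q (y i) z).
Proof. by case: clone => _ [_ [_ [_ [+ _]]]]; apply. Qed.

Lemma q_restrS a k n x :
  dim_le (@q) e a k -> k <= n -> q a (restr n.+1 x) = q a (restr n x).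
Proof.
move=> a_k le_kn.
have q_drop_last (y : 'I_n.+1 -> C) :
    q a y = q a (fun i : 'I_n.+1 => if i < n then y i else e n.+1).
  rewrite -{1}(a_k n.+1 le_kn) q_comp; congr (q a _).
  apply: functional_extensionality => i; rewrite ltnS.
  by case: ifP => _; [rewrite q_e_proj | rewrite q_e_fix].
rewrite (q_pad _ _ a (restr n x) (ltnSn n)) q_drop_last [RHS]q_drop_last.
congr (q a _); apply: functional_extensionality => i.
case: ifP => // lt_in; rewrite /pad_e /restr.
by case: insubP => [j _ -> | ]; rewrite ?lt_in.
Qed.

Lemma q_restr_dim a k n x :
  dim_le (@q) e a k -> k <= n -> q a (restr n x) = q a (restr k x).
Proof.
move=> a_k /subnKC <-; elim: (n - k) => [|d IHd]; first by rewrite addn0.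
by rewrite addnS (q_restrS _ _ _ _ a_k) ?leq_addr.
Qed.

Lemma representable_q_dim a k :
  dim_le (@q) e a k -> representable (@q) e (fun y : 'I_k -> C => q a y).
Proof. by move=> a_k; split; rewrite q_e_id. Qed.

Hypothesis fin_dim : finite_dim (@q) e.

Definition dim (a : C) : nat :=
  proj1_sig (constructive_indefinite_description _ (fin_dim a)).

Lemma dim_leP a : dim_le (@q) e a (dim a).
Proof. exact: proj2_sig (constructive_indefinite_description _ (fin_dim a)). Qed.

Definition omega_fun (a : C) (x : nat -> C) : C := q a (restr (dim a) x).

Lemma omega_funE a n x : dim a <= n -> omega_fun a x = q a (restr n x).
Proof. by move=> le_an; rewrite (q_restr_dim _ _ _ x (dim_leP a) le_an). Qed.

Lemma omega_fun_dim_le a k x : dim_le (@q) e a k -> omega_fun a x = q a (restr k x).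
Proof.
move=> a_k; rewrite (omega_funE _ _ x (leq_maxl (dim a) k)).
exact: q_restr_dim _ _ _ _ a_k (leq_maxr _ _).
Qed.

Lemma omega_fun_e i x : omega_fun (e i) x = eF i x.
Proof.
have lt_i : i < maxn (dim (e i)) i.+1 by rewrite leq_maxr.
by rewrite (omega_funE _ _ x (leq_maxl _ i.+1)) (q_e_proj _ _ (Ordinal lt_i)).
Qed.

Lemma omega_fun_q n a (b : 'I_n -> C) x :
  omega_fun (q a b) x = qF (omega_fun a) (fun j => omega_fun (b j)) x.
Proof.
pose M := \max_(j < n) dim (b j).
pose N := maxn (maxn (dim a) (dim (q a b))) (maxn n.+1 M).
have le_bM j : dim (b j) <= M := leq_bigmax (F := fun j => dim (b j)) j.
have le_bN j : dim (b j) <= N by apply: leq_trans (le_bM j) _; rewrite /N; lia.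
have [le_aN le_abN lt_nN] : [/\ dim a <= N, dim (q a b) <= N & n < N].
  by rewrite /N; split; lia.
rewrite /qF (omega_funE a N) // (omega_funE (q a b) N) // (q_pad _ _ a b lt_nN).
rewrite q_comp; congr (q a _); apply: functional_extensionality => i; rewrite /pad_e /restr.
case: insubP => [j _ _ | _]; last exact: q_e_proj.
by rewrite (omega_funE (b j) N).
Qed.

Lemma omega_fun_rop (s : rsym (@q) e) (args : 'I_(rar s) -> C) x :
  omega_fun (rop (s:=s) args) x = rop (s:=s) (fun j => omega_fun (args j) x).
Proof.
case: s args => k [f [f_dim f_q]] args; rewrite /rop /= f_q [RHS]f_q omega_fun_q.
rewrite /qF (omega_fun_dim_le _ _ _ f_dim); congr (q _ _).
by apply: functional_extensionality => j; rewrite /restr valK.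
Qed.

Lemma omega_fun_eval (y : nat -> C) (t : term (@rar C (@q) e)) x :
  omega_fun (eval ropC y t) x = eval ropC (fun i => omega_fun (y i) x) t.
Proof.
elim: t => [i|s ts IHts] //=; rewrite omega_fun_rop; congr (rop (s:=s) _).
exact: functional_extensionality.
Qed.

Lemma omega_fun_at_e a : omega_fun a e = a.
Proof. exact: q_e_id. Qed.

Lemma omega_fun_iso : iso_onto_free ropC omega_fun.
Proof.
split=> [a | g [t g_t] | a b eq_ab | ]; last exact: omega_fun_rop.
- pose s : rsym (@q) e :=
    existT _ (dim a) (exist _ _ (representable_q_dim _ _ (dim_leP a))).
  by exists (App s Var).
- exists (eval ropC e t) => x.
  rewrite g_t omega_fun_eval; congr (eval ropC _ t).
  by apply: functional_extensionality => i; rewrite omega_fun_e.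
- by rewrite -(omega_fun_at_e a) eq_ab omega_fun_at_e.
Qed.

End CloneAlgebra.

Theorem theorem10p5 (tau : Type) (ar : tau -> nat) (C : Type)
  (sig : forall s : tau, ('I_(ar s) -> C) -> C)
  (q : forall n : nat, C -> ('I_n -> C) -> C) (e : nat -> C) :
  is_clone_alg sig q e -> finite_dim q e ->
  (* (i) R_C is isomorphic to the free Var(R_C)-algebra over omega generators *)
  (exists phi : C -> (nat -> C) -> C, iso_onto_free (rop (q:=q) (e:=e)) phi) /\
  (* (ii) the clone algebra Rbar_C is isomorphic to the clone Var(R_C)-algebra *)
  (exists phi : C -> (nat -> C) -> C,
     [/\ iso_onto_free (rop (q:=q) (e:=e)) phi,
         forall i x, phi (e i) x = eF i x
       & forall n a (b : 'I_n -> C) x,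
           phi (q n a b) x = qF (phi a) (fun j => phi (b j)) x]).
Proof.
move=> clone fin_dim; have iso := omega_fun_iso clone fin_dim.
split; exists (omega_fun fin_dim) => //; split=> //.
- exact: omega_fun_e clone fin_dim.
- exact: omega_fun_q clone fin_dim.
Qed.
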